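(* There is a constant $C>0$ such that for all integers $n\ge 2$, $D\ge 1$ and $k$ with $0<k\le D$, there exist a deterministic distributed algorithm and, for every graph $G$ of size $n$ and diameter $D$, an advice assignment of size at most $C\,(n^2\log n)/(D-k+1)$, under which the algorithm accomplishes labeled topology recognition in $G$ within time $D-k$.
   Context: Graphs are finite, simple, undirected, connected, with no node labels; at each node of degree $d$ the incident edges carry distinct port numbers $0,\dots,d-1$ (no coherence between endpoints). Isomorphism is a bijection of nodes preserving edges and port numbers at both endpoints. Size = number of nodes; $\log$ is base 2. Communication model (LOCAL): synchronous rounds, all nodes start simultaneously; in each round every node may send arbitrary messages to all neighbours, receives their messages (knowing the arrival port), and performs arbitrary local computation. Initially a node knows only its degree and its advice. Advice: an oracle knowing the graph assigns each node a binary string; the size of advice is the maximum string length. All nodes run the same deterministic algorithm. Labeled topology recognition: all nodes output the same port-labeled graph $H$ with distinct node labels and each node its own label, such that some isomorphism $G\to H$ maps every node to the node carrying the label it output. Time is the number of rounds until all nodes have output (time $0$ means no communication). *)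

From mathcomp Require Import all_boot.
From Stdlib Require Import Reals.
Set Implicit Arguments.
Unset Strict Implicit.
Unset Printing Implicit Defensive.

(* [port u v = Some p] : uv is an edge and p is its port number at u;
   [port u v = None]   : u and v are not adjacent. *)
Record pgraph (n : nat) := PGraph { port : 'I_n -> 'I_n -> option nat }.

Definition nbrs n (G : pgraph n) (u : 'I_n) : {set 'I_n} :=
  [set v | port G u v != None].

Definition deg n (G : pgraph n) (u : 'I_n) : nat := #|nbrs G u|.

(* simple (no loops; multi-edges impossible by representation), undirected,
   ports at each node u are exactly 0..deg u - 1, pairwise distinct *)
Definition valid_pgraph n (G : pgraph n) : Prop :=
  [/\ forall u, port G u u = None,
      forall u v, (port G u v != None) = (port G v u != None),
      forall u v p, port G u v = Some p -> (p < deg G u)%N,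
      forall u p, (p < deg G u)%N -> exists v, port G u v = Some p
    & forall u v w p, port G u v = Some p -> port G u w = Some p -> v = w].

Fixpoint ball n (G : pgraph n) (r : nat) (u : 'I_n) : {set 'I_n} :=
  match r with
  | 0 => [set u]
  | r'.+1 => ball G r' u :|: \bigcup_(w in ball G r' u) nbrs G w
  end.

Definition has_diameter n (G : pgraph n) (D : nat) : Prop :=
  (forall u v, v \in ball G D u) /\ exists u v, v \notin ball G D.-1 u.

(* ---------- Outputs: a port-labeled graph H on nodes 'I_m (the node
   labels of H are the indices 0..m-1, hence distinct) and the node's own label *)
Definition output : Type :=
  {m : nat & (('I_m -> 'I_m -> option nat) * 'I_m)%type}.

(* Every node runs the same algorithm.  A node starts knowing only its degree
   and its advice.  In each round it sends, on each port p, the message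
   [send s p], and then updates its state with the list of messages received,
   indexed by arrival port 0..deg-1.  [out s = Some o] means the node outputs o. *)
Record algorithm := Algorithm {
  St : Type;
  Msg : Type;
  init : nat -> seq bool -> St;
  send : St -> nat -> Msg;
  step : St -> seq (option Msg) -> St;
  out : St -> option output }.

Definition advice n := 'I_n -> seq bool.

Definition nbr_at n (G : pgraph n) (w : 'I_n) (q : nat) : option 'I_n :=
  [pick u | port G w u == Some q].

Fixpoint state (A : algorithm) n (G : pgraph n) (adv : advice n) (r : nat)
  : 'I_n -> St A :=
  match r with
  | 0 => fun v => @init A (deg G v) (adv v)
  | r'.+1 =>
      let s := @state A n G adv r' in
      fun w => @step A (s w)
        [seq (match nbr_at G w q with
              | Some u => omap (@send A (s u)) (port G u w)
              | None => None
              end) | q <- iota 0 (deg G w)]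
  end.

Definition outputs_within (A : algorithm) n (G : pgraph n) (adv : advice n)
  (t : nat) (v : 'I_n) (o : output) : Prop :=
  exists r, (r <= t)%N /\ @out A (@state A n G adv r v) = Some o /\
            forall r', (r' < r)%N -> @out A (@state A n G adv r' v) = None.

Definition labeled_TR_within (A : algorithm) n (G : pgraph n) (adv : advice n)
  (t : nat) : Prop :=
  exists (m : nat) (H : 'I_m -> 'I_m -> option nat) (lab : 'I_n -> 'I_m),
    [/\ forall v, outputs_within A G adv t v (existT _ m (H, lab v)),
        bijective lab
      & forall u v, H (lab u) (lab v) = port G u v].

Definition advice_size_le n (adv : advice n) (b : R) : Prop :=
  forall v, (INR (size (adv v)) <= b)%R.

Definition log2 (x : R) : R := (ln x / ln 2)%R.

(* Let t = D - k and p = t/2 + 1, and root the graph at an endpoint r0 of a diametral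
   pair.  A binary encoding of the whole port function (n^2 entries of O(log n) bits) is
   cut into p pieces, and node v is advised its label, its class j = d(r0, v) mod p and
   the j-th piece.  Every ball of radius t meets all p classes: if j <= d(r0, v), some node
   of depth j + qp lies on a shortest path from v towards r0 within distance p - 1 <= t;
   otherwise the node of depth j on a shortest path from r0 to the far endpoint is within
   distance d(r0, v) + j <= 2p - 3 <= t.  Hence after t rounds of flooding every node holds
   all pieces and decodes the graph.  The advice has length
   O(log n + n^2 log n / p) = O(n^2 log n / (D - k + 1)). *)

From Stdlib Require Import Reals ClassicalEpsilon Lra.
From mathcomp Require Import all_boot zify.
Set Implicit Arguments.
Unset Strict Implicit.
Unset Printing Implicit Defensive.

Local Open Scope nat_scope.

Section Balls.
Variables (n : nat) (G : pgraph n).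

Lemma ballS r u x : x \in ball G r.+1 u =
  (x \in ball G r u) || [exists w in ball G r u, x \in nbrs G w].
Proof.
rewrite /= in_setU; congr (_ || _).
by apply/bigcupP/existsP => [[w Hw Hx]|[w /andP[Hw Hx]]]; exists w => //; apply/andP.
Qed.

Lemma ball_center r u : u \in ball G r u.
Proof. by elim: r => [|r IH]; rewrite ?in_set1 // ballS IH. Qed.

Lemma ball_mono r r' u x : r <= r' -> x \in ball G r u -> x \in ball G r' u.
Proof.
move=> /subnK <-; elim: (r' - r) => [//|m IH] Hx.
by rewrite addSn ballS IH.
Qed.

Lemma ball_trans a b x y z :
  y \in ball G a x -> z \in ball G b y -> z \in ball G (a + b) x.
Proof.
move=> Hy; elim: b z => [|b IH] z; first by rewrite /= in_set1 addn0 => /eqP->.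
rewrite addnS !ballS => /orP[/IH->//|/existsP[w /andP[Hw Hz]]].
by apply/orP; right; apply/existsP; exists w; rewrite Hz IH.
Qed.

Lemma ball_split a b x z :
  z \in ball G (a + b) x -> exists2 y, y \in ball G a x & z \in ball G b y.
Proof.
elim: b z => [|b IH] z; first by rewrite addn0 => Hz; exists z; rewrite ?ball_center.
rewrite addnS ballS => /orP[/IH [y Hy Hz]|/existsP[w /andP[/IH [y Hy Hw] Hz]]].
  by exists y; rewrite // ballS Hz.
by exists y; rewrite // ballS; apply/orP; right; apply/existsP; exists w; rewrite Hw.
Qed.

Hypothesis G_sym : forall u v, (port G u v != None) = (port G v u != None).

Lemma ball_sym r x y : y \in ball G r x -> x \in ball G r y.
Proof.
elim: r y => [|r IH] y; first by rewrite /= !in_set1 eq_sym.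
rewrite ballS => /orP[/IH Hx|/existsP[w /andP[Hw Hy]]]; first exact: ball_mono Hx.
have Hwy : w \in ball G 1 y.
  rewrite ballS; apply/orP; right; apply/existsP; exists y.
  by move: Hy; rewrite /= in_set1 eqxx !in_set G_sym.
by rewrite -add1n; apply: ball_trans Hwy (IH _ Hw).
Qed.

Section Depth.
Variables (r0 : 'I_n) (D : nat).
Hypothesis ball_D : forall x, x \in ball G D r0.

Definition depth x : nat := ex_minn (ex_intro (fun r => x \in ball G r r0) D (ball_D x)).

Lemma depth_ball x : x \in ball G (depth x) r0.
Proof. by rewrite /depth; case: ex_minnP. Qed.

Lemma depth_min x r : x \in ball G r r0 -> depth x <= r.
Proof. by rewrite /depth; case: ex_minnP => m _; apply. Qed.

Lemma depth_split x a b : depth x = a + b -> exists2 y, depth y = a & y \in ball G b x.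
Proof.
move=> Hx; have := depth_ball x; rewrite Hx => /ball_split [y Hy /ball_sym Hyx].
exists y => //; apply/eqP; rewrite eqn_leq depth_min //= leqNgt; apply/negP => Hlt.
by have := depth_min (ball_trans (depth_ball y) (ball_sym Hyx)); lia.
Qed.

Variable v0 : 'I_n.
Hypothesis v0_far : v0 \notin ball G D.-1 r0.

Lemma depth_onto i : i <= D -> exists y, depth y = i.
Proof.
have Dv0 : depth v0 = D.
  apply/eqP; rewrite eqn_leq depth_min //= leqNgt; apply/negP => Hlt.
  by move/negP: v0_far; apply; apply: ball_mono (depth_ball v0); lia.
move=> Hi; have [|y Hy _] := @depth_split v0 i (D - i); last by exists y.
by rewrite Dv0 subnKC.
Qed.

Lemma depth_residues_in_ball v t p c :
  2 * p <= t.+2 -> p <= D.+1 -> c < p -> exists2 y, y \in ball G t v & depth y %% p = c.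
Proof.
move=> Htp HpD Hc; case: (leqP c (depth v)) => Hcv.
  have Hr : (depth v - c) %% p < p by rewrite ltn_pmod //; lia.
  have [|y Hy Hyv] := @depth_split v (c + (depth v - c) %/ p * p) ((depth v - c) %% p).
    by rewrite -addnA -divn_eq subnKC.
  exists y; first by apply: ball_mono Hyv; lia.
  by rewrite Hy addnC modnMDl modn_small.
have [|y Hy] := @depth_onto c; first lia.
exists y; last by rewrite Hy modn_small.
have := ball_trans (ball_sym (depth_ball v)) (depth_ball y).
by apply: ball_mono; lia.
Qed.

Lemma ecc_lt_size : D < n.
Proof.
have : size (iota 0 D.+1) <= size [seq depth y | y <- enum 'I_n].
  apply: uniq_leq_size (iota_uniq _ _) _ => i; rewrite mem_iota add0n => /andP[_ Hi].
  by have [y <-] := depth_onto Hi; apply: map_f; rewrite mem_enum.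
by rewrite size_iota size_map size_enum_ord.
Qed.
End Depth.
End Balls.

Fixpoint natbits (w x : nat) : seq bool :=
  if w is w'.+1 then odd x :: natbits w' x./2 else [::].

Lemma size_natbits w x : size (natbits w x) = w.
Proof. by elim: w x => [|w IH] x //=; rewrite IH. Qed.

Lemma natbits_inj w x y : x < 2 ^ w -> y < 2 ^ w -> natbits w x = natbits w y -> x = y.
Proof.
elim: w x y => [|w IH] x y; first by case: x => //; case: y.
rewrite expnS /= => Hx Hy [Ho Hh].
have E : x./2 = y./2 by apply: IH Hh; rewrite ltn_half_double -mul2n.
by rewrite -(odd_double_half x) -(odd_double_half y) Ho E.
Qed.

Definition optbits w (e : option nat) : seq bool := isSome e :: natbits w (odflt 0 e).

Lemma optbits_inj w e e' : odflt 0 e < 2 ^ w -> odflt 0 e' < 2 ^ w ->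
  optbits w e = optbits w e' -> e = e'.
Proof.
move=> He He' [Hs /(natbits_inj He He') Hv].
by case: e Hs He Hv => [a|]; case: e' He' => [b|] //= _ _ _ ->.
Qed.

Definition ports_lt n w (f : 'I_n -> 'I_n -> option nat) : Prop :=
  forall u v, odflt 0 (f u v) < 2 ^ w.

Definition port_blocks n w (f : 'I_n -> 'I_n -> option nat) : seq (seq bool) :=
  [seq optbits w (f uv.1 uv.2) | uv <- enum [set: 'I_n * 'I_n]].

Definition port_code n w (f : 'I_n -> 'I_n -> option nat) : seq bool :=
  flatten (port_blocks w f).

Lemma shape_port_blocks n w f : shape (@port_blocks n w f) = nseq (n * n) w.+1.
Proof.
rewrite (_ : n * n = size (shape (port_blocks w f))); last first.
  by rewrite /shape /port_blocks !size_map -cardE cardsT card_prod card_ord.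
by apply/all_pred1P/allP => _ /mapP[_ /mapP[uv _ ->] ->]; rewrite /= size_natbits.
Qed.

Lemma size_port_code n w f : size (@port_code n w f) = n * n * w.+1.
Proof. by rewrite size_flatten shape_port_blocks sumn_nseq mulnC. Qed.

Lemma port_code_inj n w (f g : 'I_n -> 'I_n -> option nat) :
  ports_lt w f -> ports_lt w g -> port_code w f = port_code w g -> f = g.
Proof.
move=> Hf Hg Hfg; have /eq_in_map Eb : port_blocks w f = port_blocks w g.
  by rewrite -[LHS]flattenK -[RHS]flattenK !shape_port_blocks; exact: congr1 _ Hfg.
apply: FunctionalExtensionality.functional_extensionality => u.
apply: FunctionalExtensionality.functional_extensionality => v.
apply: optbits_inj (Hf u v) (Hg u v) (Eb (u, v) _); by rewrite mem_enum in_setT.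
Qed.

Definition piece (s : nat) (c : seq bool) (j : nat) : seq bool := take s (drop (j * s) c).

Lemma flatten_pieces s c p : flatten [seq piece s c j | j <- iota 0 p] = take (p * s) c.
Proof.
elim: p => [|p IH]; first by rewrite take0.
by rewrite -addn1 iotaD map_cat flatten_cat IH /= cats0 mulnDl mul1n takeD.
Qed.

Lemma eq_from_pieces s p c c' : size c <= p * s -> size c' <= p * s ->
  (forall j, j < p -> piece s c j = piece s c' j) -> c = c'.
Proof.
move=> Hc Hc' Hpc.
rewrite -(take_oversize Hc) -(take_oversize Hc') -!flatten_pieces.
by congr flatten; apply/eq_in_map => j; rewrite mem_iota => /andP[_ /Hpc].
Qed.

Definition port_advice n w s (f : 'I_n -> 'I_n -> option nat) (l j : nat) : seq bool :=
  natbits w l ++ natbits w j ++ piece s (port_code w f) j.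

Lemma size_port_advice n w s f l j : size (@port_advice n w s f l j) <= w + w + s.
Proof. by rewrite !size_cat !size_natbits size_take addnA leq_add2l geq_minl. Qed.

Lemma port_advice_class n w s f l j : take w (drop w (@port_advice n w s f l j)) = natbits w j.
Proof. by rewrite drop_size_cat ?size_natbits // take_size_cat ?size_natbits. Qed.

Lemma port_advice_piece n w s f l j :
  drop (w + w) (@port_advice n w s f l j) = piece s (port_code w f) j.
Proof. by rewrite -drop_drop !drop_size_cat ?size_natbits. Qed.

Definition consistent_ports n w s p (coll : seq (seq bool))
    (f : 'I_n -> 'I_n -> option nat) : Prop :=
  forall a j, a \in coll -> j < p -> take w (drop w a) = natbits w j ->
    drop (w + w) a = piece s (port_code w f) j.

(* Local computation is unrestricted, so decoding may pick any code matching the pieces. *)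
Definition decode_ports n w s p (coll : seq (seq bool)) : 'I_n -> 'I_n -> option nat :=
  epsilon (inhabits (fun _ _ => None)) (fun f => ports_lt w f /\ consistent_ports w s p coll f).

Definition decode_label n w (dflt : 'I_n) (a : seq bool) : 'I_n :=
  odflt dflt [pick l : 'I_n | take w a == natbits w l].

Lemma decode_labelE n w dflt (l : 'I_n) rest :
  n <= 2 ^ w -> decode_label w dflt (natbits w l ++ rest) = l.
Proof.
move=> Hn; rewrite /decode_label take_size_cat ?size_natbits //.
case: pickP => [l' /eqP /natbits_inj Hl' /=|/(_ l)]; last by rewrite eqxx.
by apply/val_inj/esym/Hl'; apply: leq_trans Hn.
Qed.

Lemma decode_portsE n w s p (f : 'I_n -> 'I_n -> option nat) (coll : seq (seq bool)) :
  ports_lt w f -> p <= 2 ^ w -> n * n * w.+1 <= p * s ->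
  (forall a, a \in coll -> exists l j, j < p /\ a = port_advice w s f l j) ->
  (forall j, j < p -> exists l, port_advice w s f l j \in coll) ->
  decode_ports w s p coll = f.
Proof.
move=> Hf Hp Hs Hcoll Hcover; rewrite /decode_ports.
set P := fun g => _ /\ _.
have [Hg Hcons] : P (epsilon (inhabits (fun _ _ => None)) P).
  apply: epsilon_spec; exists f; split => // a j /Hcoll [l [j' [Hj' ->]]] Hj.
  rewrite port_advice_class => /natbits_inj Ej; rewrite port_advice_piece Ej //.
  - exact: leq_trans Hj' Hp.
  - exact: leq_trans Hj Hp.
apply/esym/port_code_inj => //.
apply: (@eq_from_pieces s p); rewrite ?size_port_code // => j Hj.
have [l Hl] := Hcover j Hj.
by rewrite -(port_advice_piece w s f l j) (Hcons _ _ Hl Hj) // port_advice_class.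
Qed.

Definition flooding (t : nat) (dec : seq bool -> seq (seq bool) -> output) : algorithm :=
  {| St := nat * seq bool * seq (seq bool);
     Msg := seq (seq bool);
     init := fun _ a => (0, a, [:: a]);
     send := fun st _ => st.2;
     step := fun st ms => (st.1.1.+1, st.1.2, st.2 ++ flatten [seq odflt [::] m | m <- ms]);
     out := fun st => if st.1.1 == t then Some (dec st.1.2 st.2) else None |}.

Section Flooding.
Variables (t : nat) (dec : seq bool -> seq (seq bool) -> output).
Variables (n : nat) (G : pgraph n) (adv : advice n).
Let A := flooding t dec.

Definition collected r v : seq (seq bool) := (state A G adv r v : St A).2.

Lemma flooding_state r v : (state A G adv r v : St A).1 = (r, adv v).
Proof. by elim: r v => [|r IH] v //=; rewrite IH. Qed.

Lemma collected_advice r v a : a \in collected r v -> exists u, a = adv u.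
Proof.
elim: r v => [|r IH] v /=; first by rewrite mem_seq1 => /eqP->; exists v.
rewrite mem_cat => /orP[/IH //|/flattenP[_ /mapP[_ /mapP[q _ ->] ->]]].
by case: (nbr_at G v q) => [u|] //=; case: (port G u v) => [pp|] //= /IH.
Qed.

Hypothesis G_valid : valid_pgraph G.

Lemma nbr_at_port u v q : port G u v = Some q -> nbr_at G u q = Some v.
Proof.
case: G_valid => _ _ _ _ Huniq Huv; rewrite /nbr_at.
case: pickP => [x /eqP Hx|/(_ v)]; last by rewrite Huv eqxx.
by rewrite (Huniq _ _ _ _ Hx Huv).
Qed.

Lemma ball_collected r v u : u \in ball G r v -> adv u \in collected r v.
Proof.
case: G_valid => _ G_sym Hdeg _ _.
elim: r v u => [|r IH] v u; first by rewrite in_set1 mem_seq1 => /eqP->.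
rewrite -add1n => /ball_split [y]; rewrite ballS /= in_set1 => /orP[/eqP<- Hu|].
  by rewrite mem_cat IH.
case/existsP=> w /andP[]; rewrite in_set1 => /eqP-> Hvy /IH Hu.
rewrite mem_cat; apply/orP; right.
apply/flattenP; exists (collected r y) => //.
move: Hvy; rewrite in_set; case Evy: (port G v y) => [q|] // _.
have /negbTE Eyv : port G y v != None by rewrite -G_sym Evy.
apply/mapP; exists (Some (collected r y)) => //; apply/mapP; exists q.
  by rewrite mem_iota add0n (Hdeg _ _ _ Evy).
by rewrite (nbr_at_port Evy); case: (port G y v) Eyv.
Qed.

Lemma flooding_outputs v : outputs_within A G adv t v (dec (adv v) (collected t v)).
Proof.
exists t; split=> //; split=> [|r Hr]; rewrite /= flooding_state /=.
  by rewrite eqxx.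
by rewrite ifN_eq // ltn_eqF.
Qed.

End Flooding.

Definition recognition_decoder n (dflt : 'I_n) (w s p : nat)
    (a : seq bool) (coll : seq (seq bool)) : output :=
  existT _ n (@decode_ports n w s p coll, decode_label w dflt a).

Definition recognition_algorithm n (dflt : 'I_n) (t w s p : nat) : algorithm :=
  flooding t (recognition_decoder dflt w s p).

Lemma ports_lt_valid n w (G : pgraph n) : valid_pgraph G -> n <= 2 ^ w -> ports_lt w (port G).
Proof.
case=> _ _ Hdeg _ _ Hn u v; case E: (port G u v) => [q|] /=; last by rewrite expn_gt0.
apply: leq_trans (Hdeg _ _ _ E) (leq_trans _ Hn).
by rewrite /deg -[leqRHS](card_ord n) max_card.
Qed.

Lemma diameter_lt_size n (G : pgraph n) D : valid_pgraph G -> has_diameter G D -> D < n.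
Proof. by case=> _ G_sym _ _ _ [ball_D [r0 [v0 v0_far]]]; apply: ecc_lt_size v0_far. Qed.

Lemma recognition_correct n (dflt : 'I_n) t w s p (G : pgraph n) D :
  valid_pgraph G -> has_diameter G D -> t < D -> n <= 2 ^ w ->
  0 < p -> 2 * p <= t.+2 -> n * n * w.+1 <= p * s ->
  exists adv : advice n, (forall v, size (adv v) <= w + w + s) /\
    labeled_TR_within (recognition_algorithm dflt t w s p) G adv t.
Proof.
move=> G_valid G_diam HtD Hw Hp Hpt Hs.
have HDn := diameter_lt_size G_valid G_diam.
have G_sym : forall u v, (port G u v != None) = (port G v u != None) by case: G_valid.
case: G_diam => ball_D [r0 [v0 v0_far]].
pose cls v := depth (ball_D r0) v %% p.
pose adv : advice n := fun v => port_advice w s (port G) v (cls v).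
exists adv; split=> [v|]; first exact: size_port_advice.
pose dec := recognition_decoder dflt w s p.
have Hdec v : decode_ports w s p (collected t dec G adv t v) = port G.
  apply: decode_portsE => //; first exact: ports_lt_valid.
  - lia.
  - move=> a /collected_advice [u ->].
    by exists u, (cls u); rewrite ltn_pmod.
  - move=> j Hj.
    have [|y Hy <-] := depth_residues_in_ball G_sym (ball_D r0) v0_far v Hpt _ Hj; first lia.
    by exists y; apply: ball_collected.
exists n, (port G), id; split=> // [v|]; last by exists id.
have := flooding_outputs t dec G adv v.
by rewrite [dec _ _]/dec /recognition_decoder Hdec decode_labelE.
Qed.

Lemma double_half_bounds t : t <= 2 * t./2.+1 <= t.+2.
Proof. by have := odd_double_half t; rewrite -mul2n; case: (odd t) => /= <-; lia. Qed.

Lemma advice_length_bound n t tl : t < n ->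
  t.+1 * (tl.+1 + tl.+1 + (n * n * tl.+2 %/ t./2.+1 + 1)) <= (4 * tl + 7) * (n * n).
Proof.
move=> Htn; set p := t./2.+1; set X := _ %/ p.
have Hp : t.+1 <= 2 * p by have := double_half_bounds t; rewrite /p; lia.
have HX : t.+1 * X <= 2 * (n * n * tl.+2).
  apply: leq_trans (_ : 2 * p * X <= _); first exact: leq_mul.
  by rewrite -mulnA leq_mul2l mulnC leq_divM.
have Hn2 : t.+1 <= n * n by nia.
nia.
Qed.

Local Open Scope R_scope.

Lemma pow2_le_log2 (k : nat) (x : R) : 2 ^ k <= x -> INR k <= log2 x.
Proof.
move=> Hk.
have ln2 : 0 < ln 2 by rewrite -ln_1; apply: ln_increasing; lra.
have H2k : 0 < 2 ^ k by apply: pow_lt; lra.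
rewrite /log2; apply: (Rmult_le_reg_r (ln 2)) => //.
rewrite /Rdiv Rmult_assoc Rinv_l ?Rmult_1_r -?ln_pow; try lra.
case: (Rle_lt_or_eq_dec _ _ Hk) => [/(ln_increasing _ _ H2k)|->]; lra.
Qed.

Lemma nat_bound_nlogn (n tl T sz : nat) : (2 <= n)%N -> (2 ^ tl <= n)%N -> (0 < T)%N ->
  (T * sz <= (4 * tl + 7) * (n * n))%N ->
  INR sz <= 16 * (INR n ^ 2 * log2 (INR n)) / INR T.
Proof.
move=> Hn Htl HT H.
have HTr : 0 < INR T by apply/lt_0_INR/ltP.
have Hnr : 2 <= INR n by have := le_INR 2 n (elimT leP Hn).
have Hlog1 : 1 <= log2 (INR n).
  by have /= := @pow2_le_log2 1%N (INR n); apply; lra.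
have Hlogtl : INR tl <= log2 (INR n).
  apply/pow2_le_log2/(Rle_trans _ _ _ _ (le_INR _ _ (elimT leP Htl))); clear.
  by elim: tl => [|tl IH]; rewrite ?expnS -?multE ?mult_INR /=; lra.
have Hr : INR T * INR sz <= (4 * INR tl + 7) * (INR n * INR n).
  have -> : 4 * INR tl + 7 = INR (4 * tl + 7) by rewrite plus_INR mult_INR /=; lra.
  by rewrite -!mult_INR; apply/le_INR/leP.
apply: (Rmult_le_reg_r (INR T)) => //.
rewrite /Rdiv Rmult_assoc Rinv_l ?Rmult_1_r /=; nra.
Qed.

Theorem theorem6p1 :
  exists C : R, (0 < C)%R /\
  forall n D k : nat, (2 <= n)%N -> (1 <= D)%N -> (0 < k)%N -> (k <= D)%N ->
  exists A : algorithm,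
  forall G : pgraph n, valid_pgraph G -> has_diameter G D ->
  exists adv : advice n,
    advice_size_le adv
      (C * (INR n ^ 2 * log2 (INR n)) / INR (D - k + 1))%R /\
    labeled_TR_within A G adv (D - k).
Proof.
exists 16; split; first lra.
move=> n D k Hn _ Hk HkD; set t := (D - k)%N.
pose tl := trunc_log 2 n; pose p := t./2.+1; pose s := (n * n * tl.+2 %/ p + 1)%N.
have dflt : 'I_n by exists 0%N; lia.
exists (recognition_algorithm dflt t tl.+1 s p) => G G_valid G_diam.
have HDn := diameter_lt_size G_valid G_diam.
have [|||||adv [Hsize Htr]] := @recognition_correct n dflt t tl.+1 s p G D G_valid G_diam.
- rewrite /t; lia.
- exact/ltnW/trunc_log_ltn.
- by [].
- by case/andP: (double_half_bounds t).
- by apply/ltnW; rewrite /s addn1 [(p * _)%N]mulnC ltn_ceil.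
exists adv; split=> // v; rewrite addn1.
apply: (@nat_bound_nlogn n tl) => //; first by apply: trunc_logP; lia.
apply: leq_trans (leq_mul (leqnn _) (Hsize v)) _.
by apply: advice_length_bound; rewrite /t; lia.
Qed.
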